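(* Let $n\ge2$ be an integer, $\alpha=1-\frac1n$, and let $\beta\le0$ be real with $Q\equiv\alpha-\beta-1\le1$. There is a constant $C_n>0$ depending only on $n$ such that for all such $\beta$ and all $y\le-1$, $$C_n^{-1}e^y(-y)^{\beta-\alpha}\le\mathcal{T}(\beta,\alpha,y)\le e^y(-y)^{\beta-\alpha},\qquad C_n^{-1}(-y)^{-\beta}\le\mathcal{M}(\beta,\alpha,y)\le C_n(-y)^{-\beta}.$$
   Context: $(x)_k=\prod_{m=1}^k(x+m-1)$, $(x)_0=1$. $\mathcal{M}(\beta,\alpha,y)=\sum_{k\ge0}\frac{(\beta)_k}{(\alpha)_k}\frac{y^k}{k!}$. For $y<0$, $\mathcal{T}(\beta,\alpha,y)=\frac{e^y}{\Gamma(\alpha-\beta)}\int_0^\infty e^{yt}t^{\alpha-\beta-1}(1+t)^{\beta-1}dt$. *)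

From Stdlib Require Import Reals Factorial.
From Coquelicot Require Import Coquelicot.
Open Scope R_scope.

Fixpoint poch (x : R) (k : nat) : R :=
  match k with
  | O => 1
  | S k' => poch x k' * (x + INR k')
  end.

Definition kummerM (beta alpha y : R) : R :=
  Series (fun k => poch beta k / poch alpha k * y ^ k / INR (fact k)).

Definition Gamma (s : R) : R :=
  RInt_gen (fun t => exp (- t) * Rpower t (s - 1))
           (at_right 0) (Rbar_locally p_infty).

Definition kummerT (beta alpha y : R) : R :=
  exp y / Gamma (alpha - beta) *
  RInt_gen (fun t => exp (y * t) * Rpower t (alpha - beta - 1) * Rpower (1 + t) (beta - 1))
           (at_right 0) (Rbar_locally p_infty).

From Stdlib Require Import Reals Lra Lia Factorial Classical.
From Coquelicot Require Import Coquelicot.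
Open Scope R_scope.

(* With x = -y and a = alpha - beta in [1/2, 2], the substitution t -> t/x shows
   that the integrand of T is at most x^(-a) times the rescaled Gamma integrand, and
   it is at least a constant times x^(-a) on [1/(2x), 1/x]; Gamma is bounded above and
   below on [1/2, 2].  For M, Kummer's transformation M(beta, alpha, y) =
   e^y M(alpha - beta, alpha, x) leaves a series with positive terms r_k x^k/k!,
   r_k = (alpha + d)_k/(alpha)_k, d = -beta.  Comparing ln(1 + d/(alpha+k)) with
   d ln(1 + 1/(alpha+k)) gives r_k ~ (k+1)^d up to constant factors, and
   sum_k (k+1)^d x^k/k! ~ x^d e^x follows from the second and third moments of the
   exponential series. *)

Lemma exp_le x y : x <= y -> exp x <= exp y.
Proof.
  intros H. destruct (Rle_lt_or_eq_dec _ _ H) as [Hlt | ->]; [left; now apply exp_increasing | lra].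
Qed.

Lemma Rpower_pos x c : 0 < Rpower x c.
Proof. apply exp_pos. Qed.

Lemma Rpower_base_1 c : Rpower 1 c = 1.
Proof. unfold Rpower. now rewrite ln_1, Rmult_0_r, exp_0. Qed.

Lemma Rle_Rpower_le1 t c1 c2 : 0 < t <= 1 -> c1 <= c2 -> Rpower t c2 <= Rpower t c1.
Proof.
  intros Ht Hc. apply exp_le.
  assert (ln t <= 0) by (rewrite <- ln_1; apply ln_le; lra).
  nra.
Qed.

Lemma Rle_Rpower_l_npos a b c : c <= 0 -> 0 < a <= b -> Rpower b c <= Rpower a c.
Proof.
  intros Hc Hab. apply exp_le.
  assert (ln a <= ln b) by (apply ln_le; lra).
  nra.
Qed.

Lemma continuous_Rpower c t : 0 < t -> continuous (fun t => Rpower t c) t.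
Proof.
  intros Ht. apply (@ex_derive_continuous R_AbsRing R_NormedModule).
  exists (c * Rpower t (c - 1)). apply is_derive_Reals, derivable_pt_lim_power, Ht.
Qed.

Lemma Rpower_2 x : 0 < x -> Rpower x 2 = x ^ 2.
Proof. intros Hx. replace 2 with (INR 2) by (simpl; lra). now apply Rpower_pow. Qed.

(** * Improper integrals of nonnegative functions on (0, +oo) *)

Section NonnegImproperIntegral.
Variable f : R -> R.
Hypothesis f_cont : forall t, 0 < t -> continuous f t.
Hypothesis f_ge0 : forall t, 0 < t -> 0 <= f t.

Lemma ex_RInt_pos a b : 0 < a -> a <= b -> ex_RInt f a b.
Proof.
  intros Ha Hab. apply (@ex_RInt_continuous R_CompleteNormedModule).
  intros t Ht. rewrite Rmin_left in Ht by lra. apply f_cont. lra.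
Qed.

Lemma RInt_pos_ge0 a b : 0 < a -> a <= b -> 0 <= RInt f a b.
Proof.
  intros Ha Hab. apply RInt_ge_0; [exact Hab | now apply ex_RInt_pos |].
  intros t Ht. apply f_ge0. lra.
Qed.

Lemma RInt_pos_subinterval a' a b b' : 0 < a' -> a' <= a -> a <= b -> b <= b' ->
  RInt f a b <= RInt f a' b'.
Proof.
  intros H1 H2 H3 H4.
  rewrite <- (RInt_Chasles f a' a b') by (apply ex_RInt_pos; lra).
  rewrite <- (RInt_Chasles f a b b') by (apply ex_RInt_pos; lra).
  pose proof (RInt_pos_ge0 a' a) as Hl. pose proof (RInt_pos_ge0 b b') as Hr.
  change plus with Rplus. lra.
Qed.

Definition partial_integral (v : R) : Prop :=
  exists a b, 0 < a /\ a <= b /\ v = RInt f a b.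

Lemma is_RInt_gen_lub L : is_lub partial_integral L ->
  is_RInt_gen f (at_right 0) (Rbar_locally p_infty) L.
Proof.
  intros [Lub Lmin] P [eps Heps].
  destruct (classic (exists a b, 0 < a /\ a <= b /\ L - eps < RInt f a b))
    as [[a0 [b0 [Ha0 [Hab0 Hclose]]]] | Hfar].
  - apply Filter_prod with (Q := fun a => 0 < a < a0) (R := fun b => b0 < b).
    + exists (mkposreal a0 Ha0). intros t Ht Ht0.
      apply Rabs_def2 in Ht. simpl in *. unfold minus, plus, opp in Ht; simpl in Ht. lra.
    + now exists b0.
    + intros a b Ha Hb. exists (RInt f a b). split.
      * apply (@RInt_correct R_CompleteNormedModule), ex_RInt_pos; lra.
      * apply Heps. apply Rabs_def1; unfold minus, plus, opp; simpl.
        -- enough (RInt f a b <= L) by (pose proof (cond_pos eps); lra).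
           apply Lub. exists a, b. repeat split; lra.
        -- enough (RInt f a0 b0 <= RInt f a b) by lra.
           apply RInt_pos_subinterval; lra.
  - exfalso. enough (L <= L - eps) by (pose proof (cond_pos eps); lra).
    apply Lmin. intros v [a [b [Ha [Hab ->]]]]. apply Rnot_lt_le. intros Hlt.
    apply Hfar. now exists a, b.
Qed.

Lemma RInt_gen_pos_bounds K : (forall a b, 0 < a -> a <= b -> RInt f a b <= K) ->
  (forall a b, 0 < a -> a <= b ->
     RInt f a b <= RInt_gen f (at_right 0) (Rbar_locally p_infty)) /\
  RInt_gen f (at_right 0) (Rbar_locally p_infty) <= K.
Proof.
  intros HK.
  destruct (completeness partial_integral) as [L HL].
  - exists K. intros v [a [b [Ha [Hab ->]]]]. now apply HK.
  - exists (RInt f 1 1), 1, 1. repeat split; lra.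
  - rewrite (is_RInt_gen_unique _ _ (is_RInt_gen_lub L HL)). split.
    + intros a b Ha Hab. apply HL. now exists a, b.
    + apply HL. intros v [a [b [Ha [Hab ->]]]]. now apply HK.
Qed.

End NonnegImproperIntegral.

(** * Bounds on Gamma and on T *)

Definition gamma_integrand (a t : R) : R := exp (- t) * Rpower t (a - 1).

Lemma continuous_gamma_integrand a t : 0 < t -> continuous (gamma_integrand a) t.
Proof.
  intros Ht. apply (@continuous_mult R_UniformSpace R_AbsRing).
  - apply (@ex_derive_continuous R_AbsRing R_NormedModule). auto_derive; auto.
  - now apply continuous_Rpower.
Qed.

Lemma gamma_integrand_ge0 a t : 0 <= gamma_integrand a t.
Proof. apply Rmult_le_pos; left; [apply exp_pos | apply Rpower_pos]. Qed.

Lemma RInt_inv_sqrt_le m : 0 < m <= 1 -> RInt (fun t => Rpower t (- 1 / 2)) m 1 <= 2.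
Proof.
  intros Hm.
  assert (H : is_RInt (fun t => Rpower t (- 1 / 2)) m 1
                (minus (2 * Rpower 1 (1 / 2)) (2 * Rpower m (1 / 2)))).
  { apply (@is_RInt_derive R_CompleteNormedModule (fun t => 2 * Rpower t (1 / 2))).
    - intros t Ht. rewrite Rmin_left, Rmax_right in Ht by lra.
      apply is_derive_Reals.
      replace (Rpower t (- 1 / 2)) with (2 * (1 / 2 * Rpower t (1 / 2 - 1)))
        by (replace (1 / 2 - 1) with (- 1 / 2) by lra; field).
      apply derivable_pt_lim_scal, derivable_pt_lim_power. lra.
    - intros t Ht. rewrite Rmin_left in Ht by lra. apply continuous_Rpower. lra. }
  rewrite (is_RInt_unique _ _ _ _ H), Rpower_base_1.
  unfold minus, plus, opp; simpl. pose proof (Rpower_pos m (1 / 2)). lra.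
Qed.

Lemma RInt_exp_neg_id_le M : 1 <= M -> RInt (fun t => exp (- t) * t) 1 M <= 1.
Proof.
  intros HM.
  assert (H : is_RInt (fun t => exp (- t) * t) 1 M
                (minus (- (M + 1) * exp (- M)) (- (1 + 1) * exp (- (1))))).
  { apply (@is_RInt_derive R_CompleteNormedModule (fun t => - (t + 1) * exp (- t))).
    - intros t Ht. auto_derive; auto. ring.
    - intros t Ht. apply (@ex_derive_continuous R_AbsRing R_NormedModule). auto_derive; auto. }
  rewrite (is_RInt_unique _ _ _ _ H). unfold minus, plus, opp; simpl.
  assert (exp (- (1)) <= / 2).
  { rewrite exp_Ropp. apply Rinv_le_contravar; [lra |].
    pose proof (exp_ineq1_le 1). lra. }
  pose proof (exp_pos (- M)). nra.
Qed.

Section GammaBounds.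
Variable a : R.
Hypothesis a_range : 1 / 2 <= a <= 2.

Lemma RInt_gamma_integrand_le a' b' : 0 < a' -> a' <= b' -> RInt (gamma_integrand a) a' b' <= 3.
Proof.
  intros Ha' Hab.
  set (m := Rmin a' 1). set (M := Rmax b' 1).
  assert (Hm : 0 < m <= 1) by (unfold m; split; [apply Rmin_case; lra | apply Rmin_r]).
  assert (HM : 1 <= M) by apply Rmax_r.
  pose proof (continuous_gamma_integrand a) as Hc.
  pose proof (ex_RInt_pos _ Hc) as Hex.
  assert (Hwiden : RInt (gamma_integrand a) a' b' <= RInt (gamma_integrand a) m M).
  { apply RInt_pos_subinterval; auto using gamma_integrand_ge0; try lra.
    apply Rmin_l. apply Rmax_l. }
  rewrite <- (RInt_Chasles _ m 1 M) in Hwiden by (apply Hex; lra).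
  assert (Hnear0 : RInt (gamma_integrand a) m 1 <= RInt (fun t => Rpower t (- 1 / 2)) m 1).
  { apply RInt_le; try lra; [apply Hex; lra | |].
    - apply (ex_RInt_pos _ (fun t => continuous_Rpower _ t)); lra.
    - intros t Ht. unfold gamma_integrand.
      assert (exp (- t) <= 1) by (rewrite <- exp_0; apply exp_le; lra).
      assert (Rpower t (a - 1) <= Rpower t (- 1 / 2)) by (apply Rle_Rpower_le1; lra).
      pose proof (Rpower_pos t (a - 1)). nra. }
  assert (Hnearoo : RInt (gamma_integrand a) 1 M <= RInt (fun t => exp (- t) * t) 1 M).
  { apply RInt_le; try lra; [apply Hex; lra | |].
    - apply (@ex_RInt_continuous R_CompleteNormedModule). intros t _.
      apply (@ex_derive_continuous R_AbsRing R_NormedModule). auto_derive; auto.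
    - intros t Ht. unfold gamma_integrand.
      assert (Rpower t (a - 1) <= t)
        by (rewrite <- (Rpower_1 t) at 2 by lra; apply Rle_Rpower; lra).
      pose proof (exp_pos (- t)). nra. }
  pose proof (RInt_inv_sqrt_le m Hm). pose proof (RInt_exp_neg_id_le M HM).
  change plus with Rplus in Hwiden. lra.
Qed.

Lemma RInt_gamma_integrand_ge : exp (-2) / 2 <= RInt (gamma_integrand a) 1 2.
Proof.
  replace (exp (-2) / 2) with (RInt (fun _ => exp (-2) / 2) 1 2)
    by (rewrite RInt_const; unfold scal; simpl; unfold mult; simpl; ring).
  apply RInt_le; try lra; [apply ex_RInt_const | |].
  - apply (ex_RInt_pos _ (continuous_gamma_integrand a)); lra.
  - intros t Ht. unfold gamma_integrand.
    assert (exp (-2) <= exp (- t)) by (apply exp_le; lra).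
    assert (/ 2 <= Rpower t (a - 1)).
    { apply Rle_trans with (Rpower t (- (1))); [| apply Rle_Rpower; lra].
      rewrite Rpower_Ropp, Rpower_1 by lra. apply Rinv_le_contravar; lra. }
    pose proof (exp_pos (-2)). nra.
Qed.

Lemma Gamma_bounds : exp (-2) / 2 <= Gamma a <= 3.
Proof.
  destruct (RInt_gen_pos_bounds (gamma_integrand a) (continuous_gamma_integrand a)
              (fun t _ => gamma_integrand_ge0 a t) 3 RInt_gamma_integrand_le) as [Hsup Hle].
  split; [| exact Hle].
  eapply Rle_trans; [apply RInt_gamma_integrand_ge | apply Hsup; lra].
Qed.

End GammaBounds.

Section KummerTBounds.
Variables alpha beta y : R.
Hypothesis beta_range : -2 <= beta <= 0.
Hypothesis a_range : 1 / 2 <= alpha - beta <= 2.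
Hypothesis y_le : y <= -1.

Let a := alpha - beta.
Let x := - y.

Definition kummerT_integrand (t : R) : R :=
  exp (y * t) * Rpower t (alpha - beta - 1) * Rpower (1 + t) (beta - 1).

Lemma continuous_kummerT_integrand t : 0 < t -> continuous kummerT_integrand t.
Proof.
  intros Ht. apply (@ex_derive_continuous R_AbsRing R_NormedModule).
  unfold kummerT_integrand, Rpower. auto_derive. lra.
Qed.

Lemma kummerT_integrand_ge0 t : 0 <= kummerT_integrand t.
Proof.
  unfold kummerT_integrand.
  repeat apply Rmult_le_pos; left; auto using exp_pos, Rpower_pos.
Qed.

Lemma Rpower_rescale t c : 0 < t -> Rpower t c = Rpower x (- c) * Rpower (x * t) c.
Proof.
  intros Ht. unfold x. rewrite <- Rpower_mult_distr, Rpower_Ropp by lra.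
  field. apply Rgt_not_eq, Rpower_pos.
Qed.

(* The [scal x _] and [x * t + 0] are in the shape expected by [RInt_comp_lin]. *)
Lemma kummerT_integrand_le t : 0 < t ->
  kummerT_integrand t <= Rpower x (- a) * scal x (gamma_integrand a (x * t + 0)).
Proof.
  intros Ht. unfold kummerT_integrand, gamma_integrand, scal; simpl; unfold mult; simpl.
  rewrite Rplus_0_r, (Rpower_rescale t) by lra.
  replace (- (x * t)) with (y * t) by (unfold x; ring).
  replace (alpha - beta - 1) with (a - 1) by (unfold a; ring).
  replace (- (a - 1)) with (- a + 1) by ring.
  rewrite Rpower_plus, (Rpower_1 x) by (unfold x; lra).
  assert (Rpower (1 + t) (beta - 1) <= 1)
    by (apply Rle_trans with (Rpower (1 + t) 0); [apply Rle_Rpower | rewrite Rpower_O]; lra).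
  assert (0 <= exp (y * t) * (Rpower x (- a) * x * Rpower (x * t) (a - 1))).
  { pose proof (exp_pos (y * t)). pose proof (Rpower_pos x (- a)).
    pose proof (Rpower_pos (x * t) (a - 1)). unfold x in *.
    repeat apply Rmult_le_pos; lra. }
  pose proof (Rpower_pos (1 + t) (beta - 1)). nra.
Qed.

Lemma RInt_kummerT_integrand_le a' b' : 0 < a' -> a' <= b' ->
  RInt kummerT_integrand a' b' <= Rpower x (- a) * Gamma a.
Proof.
  intros Ha' Hab.
  assert (Hx : 1 <= x) by (unfold x; lra).
  assert (Hex : ex_RInt (gamma_integrand a) (x * a' + 0) (x * b' + 0))
    by (apply (ex_RInt_pos _ (continuous_gamma_integrand a)); nra).
  apply Rle_trans
    with (RInt (fun t => scal (Rpower x (- a)) (scal x (gamma_integrand a (x * t + 0)))) a' b').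
  { apply RInt_le; auto.
    - apply (ex_RInt_pos _ continuous_kummerT_integrand); lra.
    - apply (@ex_RInt_scal R_NormedModule), (@ex_RInt_comp_lin R_NormedModule), Hex.
    - intros t Ht. apply kummerT_integrand_le. lra. }
  rewrite (@RInt_scal R_CompleteNormedModule), (@RInt_comp_lin R_CompleteNormedModule) by
    first [exact Hex | apply (@ex_RInt_comp_lin R_NormedModule), Hex].
  unfold scal; simpl; unfold mult; simpl.
  apply Rmult_le_compat_l; [left; apply Rpower_pos |].
  destruct (RInt_gen_pos_bounds (gamma_integrand a) (continuous_gamma_integrand a)
              (fun t _ => gamma_integrand_ge0 a t) 3 (RInt_gamma_integrand_le a a_range))
    as [Hsup _].
  apply Hsup; nra.
Qed.

Lemma kummerT_integrand_ge t : / (2 * x) <= t <= / x ->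
  exp (-1) * (Rpower x (1 - a) / 2) * / 8 <= kummerT_integrand t.
Proof.
  intros [Ht1 Ht2].
  assert (Hx : 1 <= x) by (unfold x; lra).
  assert (Ht0 : 0 < t) by (pose proof (Rinv_0_lt_compat (2 * x)); lra).
  assert (Hxt : 1 / 2 <= x * t <= 1).
  { split.
    - replace (1 / 2) with (x * / (2 * x)) by (field; lra). apply Rmult_le_compat_l; lra.
    - rewrite <- (Rinv_r x) by lra. apply Rmult_le_compat_l; lra. }
  assert (Ht : t <= 1).
  { assert (/ x <= 1) by (rewrite <- Rinv_1; apply Rinv_le_contravar; lra). lra. }
  assert (Hexp : exp (-1) <= exp (y * t))
    by (apply exp_le; replace (y * t) with (- (x * t)) by (unfold x; ring); lra).
  assert (Hpow : Rpower x (1 - a) / 2 <= Rpower t (alpha - beta - 1)).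
  { rewrite (Rpower_rescale t) by lra.
    replace (- (alpha - beta - 1)) with (1 - a) by (unfold a; ring).
    assert (1 / 2 <= Rpower (x * t) (alpha - beta - 1)).
    { eapply Rle_trans; [| apply (Rle_Rpower_le1 _ _ 1)]; try (unfold a in *; lra).
      rewrite Rpower_1; lra. }
    pose proof (Rpower_pos x (1 - a)). nra. }
  assert (Hone : / 8 <= Rpower (1 + t) (beta - 1)).
  { eapply Rle_trans; [| apply (Rle_Rpower_l_npos _ 2)]; try lra.
    eapply Rle_trans; [| apply (Rle_Rpower _ (- (3))); lra].
    rewrite Rpower_Ropp. apply Rinv_le_contravar; [apply Rpower_pos |].
    replace 3 with (INR 3) by (simpl; lra). rewrite Rpower_pow by lra. simpl; lra. }
  pose proof (exp_pos (-1)). pose proof (Rpower_pos x (1 - a)).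
  unfold kummerT_integrand.
  apply Rmult_le_compat; try lra; [apply Rmult_le_pos; lra |].
  apply Rmult_le_compat; lra.
Qed.

Lemma RInt_kummerT_integrand_ge :
  exp (-1) / 32 * Rpower x (- a) <= RInt kummerT_integrand (/ (2 * x)) (/ x).
Proof.
  assert (Hx : 1 <= x) by (unfold x; lra).
  assert (Hlim : / (2 * x) <= / x) by (apply Rinv_le_contravar; lra).
  set (c := exp (-1) * (Rpower x (1 - a) / 2) * / 8).
  replace (exp (-1) / 32 * Rpower x (- a)) with (RInt (fun _ => c) (/ (2 * x)) (/ x)).
  - apply RInt_le; auto; [apply ex_RInt_const | |].
    + apply (ex_RInt_pos _ continuous_kummerT_integrand); auto.
      apply Rinv_0_lt_compat. lra.
    + intros t Ht. apply kummerT_integrand_ge. lra.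
  - rewrite RInt_const. unfold scal; simpl; unfold mult; simpl. unfold c.
    replace (1 - a) with (1 + - a) by ring. rewrite Rpower_plus, Rpower_1 by lra.
    field. lra.
Qed.

Lemma kummerT_bounds :
  / 288 * exp y * Rpower (- y) (beta - alpha) <= kummerT beta alpha y <=
  exp y * Rpower (- y) (beta - alpha).
Proof.
  assert (Hx : 1 <= x) by (unfold x; lra).
  destruct (RInt_gen_pos_bounds kummerT_integrand continuous_kummerT_integrand
              (fun t _ => kummerT_integrand_ge0 t) _ RInt_kummerT_integrand_le)
    as [Hsup Hle].
  assert (Hge : exp (-1) / 32 * Rpower x (- a) <=
                RInt_gen kummerT_integrand (at_right 0) (Rbar_locally p_infty)).
  { eapply Rle_trans; [apply RInt_kummerT_integrand_ge | apply Hsup].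
    - apply Rinv_0_lt_compat. lra.
    - apply Rinv_le_contravar; lra. }
  unfold kummerT. fold kummerT_integrand. fold a x.
  replace (beta - alpha) with (- a) by (unfold a; ring).
  set (I := RInt_gen kummerT_integrand (at_right 0) (Rbar_locally p_infty) : R) in *.
  destruct (Gamma_bounds a a_range) as [HG1 HG2].
  assert (He : / 3 <= exp (-1)).
  { replace (-1) with (- (1)) by ring. rewrite exp_Ropp.
    apply Rinv_le_contravar; [apply exp_pos | apply exp_le_3]. }
  pose proof (exp_pos (-2)). pose proof (exp_pos y). pose proof (Rpower_pos x (- a)).
  replace (exp y / Gamma a * I) with (exp y * (I / Gamma a)) by (field; lra).
  replace (/ 288 * exp y * Rpower x (- a)) with (exp y * (/ 288 * Rpower x (- a))) by ring.
  split; apply Rmult_le_compat_l; try lra.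
  - apply Rmult_le_reg_l with (Gamma a); [lra |].
    replace (Gamma a * (I / Gamma a)) with I by (field; lra). nra.
  - apply Rmult_le_reg_l with (Gamma a); [lra |].
    replace (Gamma a * (I / Gamma a)) with I by (field; lra). nra.
Qed.

End KummerTBounds.

(** * Kummer's transformation *)

Lemma poch_S_l x k : poch x (S k) = x * poch (x + 1) k.
Proof.
  induction k as [| k IH]; [simpl; ring |].
  change (poch x (S (S k))) with (poch x (S k) * (x + INR (S k))).
  rewrite IH, S_INR. simpl. ring.
Qed.

Lemma poch_pos x k : 0 < x -> 0 < poch x k.
Proof.
  intros Hx. induction k as [| k IH]; simpl; [lra |].
  pose proof (pos_INR k). apply Rmult_lt_0_compat; lra.
Qed.

(* Stdlib's [Binomial.C n j] is not 0 for [j > n], which breaks Pascal's rule at the boundary. *)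
Definition binom (n j : nat) : R := if (j <=? n)%nat then Binomial.C n j else 0.

Lemma binom_n_0 n : binom n 0 = 1.
Proof.
  unfold binom, Binomial.C. simpl. rewrite Nat.sub_0_r.
  field. apply INR_fact_neq_0.
Qed.

Lemma binom_n_Sn n : binom n (S n) = 0.
Proof. unfold binom. now rewrite (proj2 (Nat.leb_gt _ _) (Nat.lt_succ_diag_r n)). Qed.

Lemma binom_pascal n j : binom (S n) (S j) = binom n j + binom n (S j).
Proof.
  unfold binom. destruct (Nat.lt_trichotomy j n) as [Hlt | [-> | Hgt]].
  - rewrite !(proj2 (Nat.leb_le _ _)) by lia. symmetry. now apply pascal.
  - rewrite Nat.leb_refl, (proj2 (Nat.leb_le _ _)), (proj2 (Nat.leb_gt _ _)) by lia.
    unfold Binomial.C. rewrite !Nat.sub_diag. simpl (fact 0). simpl (INR 1).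
    field. split; apply INR_fact_neq_0.
  - rewrite !(proj2 (Nat.leb_gt _ _)) by lia. ring.
Qed.

Definition chu_vandermonde_sum (n : nat) (A al : R) : R :=
  sum_f_R0 (fun j => binom n j * (-1) ^ j * (poch A j / poch al j)) n.

Lemma chu_vandermonde_sum_S n A al : 0 < al ->
  chu_vandermonde_sum (S n) A al =
  chu_vandermonde_sum n A al - A / al * chu_vandermonde_sum n (A + 1) (al + 1).
Proof.
  intros Hal. unfold chu_vandermonde_sum.
  set (g := fun j => binom n j * (-1) ^ j * (poch A j / poch al j)).
  assert (Hg : sum_f_R0 g n = g 0%nat + sum_f_R0 (fun j => g (S j)) n).
  { transitivity (sum_f_R0 g (S n)).
    - rewrite tech5. unfold g at 3. rewrite binom_n_Sn. ring.
    - apply decomp_sum. lia. }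
  rewrite decomp_sum by lia. simpl pred. rewrite Hg.
  rewrite (sum_eq _ (fun j => g (S j) +
             binom n j * (-1) ^ j * (poch (A + 1) j / poch (al + 1) j) * - (A / al))).
  - rewrite plus_sum, <- scal_sum. unfold g. rewrite !binom_n_0. ring.
  - intros j _. unfold g. rewrite binom_pascal, !poch_S_l. simpl pow.
    pose proof (poch_pos (al + 1) j ltac:(lra)). field. lra.
Qed.

Lemma chu_vandermonde n : forall A al, 0 < al ->
  chu_vandermonde_sum n A al = poch (al - A) n / poch al n.
Proof.
  induction n as [| n IH]; intros A al Hal.
  - unfold chu_vandermonde_sum. simpl. rewrite binom_n_0. field.
  - rewrite chu_vandermonde_sum_S, !IH by lra.
    replace (al + 1 - (A + 1)) with (al - A) by ring.
    assert (Hshift : poch (al + 1) n = poch al n * (al + INR n) / al).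
    { pose proof (poch_S_l al n) as H. simpl in H. field_simplify_eq; lra. }
    rewrite Hshift. simpl.
    pose proof (pos_INR n). pose proof (poch_pos al n Hal).
    field. repeat split; lra.
Qed.

Definition exp_term (x : R) (k : nat) : R := x ^ k / INR (fact k).

Lemma exp_term_pos x k : 0 < x -> 0 < exp_term x k.
Proof. intros Hx. apply Rdiv_lt_0_compat; [now apply pow_lt | apply INR_fact_lt_0]. Qed.

Lemma is_series_exp y : is_series (exp_term y) (exp y).
Proof.
  eapply is_series_ext; [| apply (is_exp_Reals y)]. intros k. simpl.
  rewrite pow_n_pow. unfold exp_term, scal; simpl; unfold mult; simpl. unfold Rdiv. ring.
Qed.

Lemma ex_series_Rabs_exp y : ex_series (fun k => Rabs (exp_term y k)).
Proof.
  exists (exp (Rabs y)). eapply is_series_ext; [| apply (is_series_exp (Rabs y))].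
  intros k. unfold exp_term. rewrite Rabs_div, <- RPow_abs, (Rabs_right (INR _)) by
    (apply INR_fact_neq_0 || apply Rle_ge, pos_INR).
  reflexivity.
Qed.

Lemma kummerM_transformation al A y : 0 < al ->
  ex_series (fun k => Rabs (poch A k / poch al k * exp_term (- y) k)) ->
  kummerM (al - A) al y = exp y * Series (fun k => poch A k / poch al k * exp_term (- y) k).
Proof.
  intros Hal Habs.
  set (c := fun k => poch A k / poch al k * exp_term (- y) k) in *.
  assert (Hc : ex_series c) by now apply ex_series_Rabs.
  pose proof (is_series_mult c _ _ _ (Series_correct c Hc) (is_series_exp y)
                Habs (ex_series_Rabs_exp y)) as Hprod.
  unfold kummerM. rewrite Rmult_comm. apply is_series_unique.
  eapply is_series_ext; [| exact Hprod]. intros n. simpl.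
  transitivity (y ^ n / INR (fact n) * chu_vandermonde_sum n A al).
  - unfold chu_vandermonde_sum. rewrite scal_sum. apply sum_eq. intros k Hk.
    unfold c, exp_term, binom, Binomial.C. rewrite (proj2 (Nat.leb_le _ _) Hk).
    replace (y ^ n) with (y ^ k * y ^ (n - k)) by (rewrite <- pow_add; f_equal; lia).
    replace ((- y) ^ k) with ((-1) ^ k * y ^ k) by (rewrite <- Rpow_mult_distr; f_equal; ring).
    pose proof (INR_fact_neq_0 k). pose proof (INR_fact_neq_0 (n - k)).
    pose proof (INR_fact_neq_0 n). pose proof (poch_pos al k Hal).
    field. repeat split; lra.
  - rewrite chu_vandermonde by exact Hal. replace (al - (al - A)) with A by ring.
    pose proof (INR_fact_neq_0 n). pose proof (poch_pos al n Hal).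
    field. split; lra.
Qed.

(** * Ratios of Pochhammer symbols *)

Lemma ln_le_sub_1 z : 0 < z -> ln z <= z - 1.
Proof.
  intros Hz. rewrite <- (ln_exp (z - 1)).
  apply ln_le; [exact Hz |]. pose proof (exp_ineq1_le (z - 1)). lra.
Qed.

Lemma ln_1p_bounds v : 0 <= v -> v - v ^ 2 <= ln (1 + v) <= v.
Proof.
  intros Hv. split.
  - assert (H : ln (/ (1 + v)) <= / (1 + v) - 1)
      by (apply ln_le_sub_1, Rinv_0_lt_compat; lra).
    rewrite ln_Rinv in H by lra.
    enough (v - v ^ 2 <= 1 - / (1 + v)) by lra.
    apply Rmult_le_reg_r with (1 + v); [lra |].
    replace ((1 - / (1 + v)) * (1 + v)) with v by (field; lra). nra.
  - pose proof (ln_le_sub_1 (1 + v)). lra.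
Qed.

Lemma ln_1p_scal_error d u : 0 <= d <= 3 / 2 -> 0 <= u ->
  Rabs (ln (1 + d * u) - d * ln (1 + u)) <= 3 * u ^ 2.
Proof.
  intros Hd Hu.
  destruct (ln_1p_bounds (d * u)) as [Hdu1 Hdu2]; [nra |].
  destruct (ln_1p_bounds u) as [Hu1 Hu2]; [lra |].
  assert (d * (u - u ^ 2) <= d * ln (1 + u) <= d * u)
    by (split; apply Rmult_le_compat_l; lra).
  assert (d ^ 2 * u ^ 2 <= 3 * u ^ 2) by (apply Rmult_le_compat_r; nra).
  assert (d * u ^ 2 <= 3 * u ^ 2) by (apply Rmult_le_compat_r; nra).
  apply Rabs_le_between. split; simpl in *; nra.
Qed.

Lemma Rabs_le_increments (D e s : nat -> R) :
  Rabs (D 0%nat) <= s 0%nat ->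
  (forall k, Rabs (D (S k) - D k) <= e k) ->
  (forall k, s k + e k <= s (S k)) ->
  forall k, Rabs (D k) <= s k.
Proof.
  intros H0 Hinc Hs k. induction k as [| k IH]; [exact H0 |].
  replace (D (S k)) with (D k + (D (S k) - D k)) by ring.
  eapply Rle_trans; [apply Rabs_triang |]. specialize (Hinc k). specialize (Hs k). lra.
Qed.

Section PochhammerRatio.
Variables al d : R.
Hypothesis al_range : 1 / 2 <= al <= 1.
Hypothesis d_range : 0 <= d <= 3 / 2.

Let r k := poch (al + d) k / poch al k.

Lemma poch_ratio_pos k : 0 < r k.
Proof. apply Rdiv_lt_0_compat; apply poch_pos; lra. Qed.

Lemma ln_poch_ratio_S k : ln (r (S k)) = ln (r k) + ln (1 + d * / (al + INR k)).
Proof.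
  pose proof (pos_INR k). pose proof (poch_ratio_pos k).
  assert (Hu : 0 < / (al + INR k)) by (apply Rinv_0_lt_compat; lra).
  rewrite <- ln_mult by nra. f_equal.
  unfold r. simpl. pose proof (poch_pos al k ltac:(lra)). field. lra.
Qed.

Lemma ln_shift_S k :
  ln ((al + INR (S k)) / al) = ln ((al + INR k) / al) + ln (1 + / (al + INR k)).
Proof.
  pose proof (pos_INR k).
  assert (Hu : 0 < / (al + INR k)) by (apply Rinv_0_lt_compat; lra).
  rewrite <- ln_mult; [| apply Rdiv_lt_0_compat | ]; try lra.
  f_equal. rewrite S_INR. field. lra.
Qed.

(* [9/al - 9/(al+k)] telescopes and majorizes the partial sums of [3/(al+j)^2] since [al >= 1/2]. *)
Lemma ln_poch_ratio_estimate k :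
  Rabs (ln (r k) - d * ln ((al + INR k) / al)) <= 9 / al - 9 / (al + INR k).
Proof.
  apply (Rabs_le_increments (fun k => ln (r k) - d * ln ((al + INR k) / al))
           (fun k => 3 * (/ (al + INR k)) ^ 2) (fun k => 9 / al - 9 / (al + INR k))).
  - unfold r. simpl. rewrite Rplus_0_r, Rminus_diag, !Rdiv_diag by lra.
    rewrite ln_1, Rmult_0_r, Rminus_0_r, Rabs_R0. lra.
  - intros j. rewrite ln_poch_ratio_S, ln_shift_S.
    replace (ln (r j) + ln (1 + d * / (al + INR j)) -
             d * (ln ((al + INR j) / al) + ln (1 + / (al + INR j))) -
             (ln (r j) - d * ln ((al + INR j) / al)))
      with (ln (1 + d * / (al + INR j)) - d * ln (1 + / (al + INR j))) by ring.
    apply ln_1p_scal_error; [lra |].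
    left. apply Rinv_0_lt_compat. pose proof (pos_INR j). lra.
  - intros j. rewrite S_INR. pose proof (pos_INR j).
    replace (9 / al - 9 / (al + (INR j + 1)))
      with (9 / al - 9 / (al + INR j) + 9 / ((al + INR j) * (al + INR j + 1)))
      by (field; lra).
    enough (3 * (/ (al + INR j)) ^ 2 <= 9 / ((al + INR j) * (al + INR j + 1))) by lra.
    replace (3 * (/ (al + INR j)) ^ 2) with (9 / ((al + INR j) * (3 * (al + INR j))))
      by (field; lra).
    apply Rmult_le_compat_l; [lra |].
    apply Rinv_le_contravar; nra.
Qed.

Lemma poch_ratio_bounds k :
  exp (-18) * Rpower (INR k + 1) d <= r k <= 4 * exp 18 * Rpower (INR k + 1) d.
Proof.
  pose proof (pos_INR k).
  assert (Hpot : 9 / al - 9 / (al + INR k) <= 18).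
  { assert (9 / al <= 18) by (apply Rmult_le_reg_r with al; [lra | field_simplify; lra]).
    assert (0 <= 9 / (al + INR k)) by (apply Rdiv_le_0_compat; lra). lra. }
  pose proof (ln_poch_ratio_estimate k) as Hest. apply Rabs_le_between in Hest.
  assert (Hr : r k = exp (ln (r k))) by (symmetry; apply exp_ln, poch_ratio_pos).
  assert (Hw : Rpower (INR k + 1) d <= Rpower ((al + INR k) / al) d <= 4 * Rpower (INR k + 1) d).
  { assert (Hq : INR k + 1 <= (al + INR k) / al <= 2 * (INR k + 1)).
    { split; apply Rmult_le_reg_r with al; try lra;
        replace ((al + INR k) / al * al) with (al + INR k) by (field; lra); nra. }
    split; [apply Rle_Rpower_l; lra |].
    apply Rle_trans with (Rpower (2 * (INR k + 1)) d).
    { apply Rle_Rpower_l; [lra | split; [apply Rdiv_lt_0_compat | apply Hq]; lra]. }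
    rewrite <- Rpower_mult_distr by lra. apply Rmult_le_compat_r; [left; apply Rpower_pos |].
    replace 4 with (2 ^ 2) by ring. rewrite <- Rpower_pow by lra. simpl INR.
    apply Rle_Rpower; lra. }
  assert (Hrw : exp (-18) * Rpower ((al + INR k) / al) d <= r k <=
                exp 18 * Rpower ((al + INR k) / al) d).
  { rewrite Hr. unfold Rpower. rewrite <- !exp_plus. split; apply exp_le; lra. }
  pose proof (exp_pos (-18)). pose proof (exp_pos 18).
  rewrite (Rmult_comm 4), Rmult_assoc.
  split; eapply Rle_trans; try apply Hrw; apply Rmult_le_compat_l; lra.
Qed.

End PochhammerRatio.

(** * Moments of the exponential series *)

Lemma is_series_le (a b : nat -> R) la lb :
  is_series a la -> is_series b lb -> (forall k, a k <= b k) -> la <= lb.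
Proof.
  intros Ha Hb Hab.
  apply (is_lim_seq_le (sum_n a) (sum_n b) la lb); [| exact Ha | exact Hb].
  intros n. rewrite !sum_n_Reals. apply sum_Rle. auto.
Qed.

Fixpoint falling (k j : nat) : R :=
  match j with O => 1 | S j => INR k * falling (pred k) j end.

Lemma is_series_falling x j :
  is_series (fun k => falling k j * exp_term x k) (x ^ j * exp x).
Proof.
  induction j as [| j IH].
  - eapply is_series_ext; [| rewrite Rmult_1_l; apply is_series_exp].
    intros k. simpl. ring.
  - apply is_series_decr_1.
    replace (plus _ _) with (scal x (x ^ j * exp x))
      by (unfold plus, opp, scal; simpl; unfold mult; simpl; ring).
    eapply is_series_ext; [| apply (is_series_scal x _ _ IH)].
    intros k. unfold exp_term. cbn [falling pred pow]. rewrite fact_simpl, mult_INR, !S_INR.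
    unfold scal; simpl; unfold mult; simpl.
    pose proof (INR_fact_neq_0 k). pose proof (pos_INR k).
    field. lra.
Qed.

Lemma is_series_moment2 x :
  is_series (fun k => (INR k + 1) ^ 2 * exp_term x k) ((x ^ 2 + 3 * x + 1) * exp x).
Proof.
  pose proof (is_series_plus _ _ _ _ (is_series_falling x 2)
     (is_series_plus _ _ _ _ (is_series_scal 3 _ _ (is_series_falling x 1))
                             (is_series_falling x 0))) as H.
  replace ((x ^ 2 + 3 * x + 1) * exp x) with
    (plus (x ^ 2 * exp x) (plus (scal 3 (x ^ 1 * exp x)) (x ^ 0 * exp x)))
    by (unfold plus, scal; simpl; unfold mult; simpl; ring).
  eapply is_series_ext; [| exact H]. intros k.
  unfold plus, scal; simpl; unfold mult; simpl.
  destruct k as [| [| k]]; cbn [falling pred]; rewrite ?S_INR; simpl; ring.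
Qed.

Lemma is_series_moment3 x :
  is_series (fun k => (INR k + 1) ^ 3 * exp_term x k)
            ((x ^ 3 + 6 * x ^ 2 + 7 * x + 1) * exp x).
Proof.
  pose proof (is_series_plus _ _ _ _ (is_series_falling x 3)
     (is_series_plus _ _ _ _ (is_series_scal 6 _ _ (is_series_falling x 2))
       (is_series_plus _ _ _ _ (is_series_scal 7 _ _ (is_series_falling x 1))
                               (is_series_falling x 0)))) as H.
  replace ((x ^ 3 + 6 * x ^ 2 + 7 * x + 1) * exp x) with
    (plus (x ^ 3 * exp x) (plus (scal 6 (x ^ 2 * exp x))
       (plus (scal 7 (x ^ 1 * exp x)) (x ^ 0 * exp x))))
    by (unfold plus, scal; simpl; unfold mult; simpl; ring).
  eapply is_series_ext; [| exact H]. intros k.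
  unfold plus, scal; simpl; unfold mult; simpl.
  destruct k as [| [| [| k]]]; cbn [falling pred]; rewrite ?S_INR; simpl; ring.
Qed.

Lemma Rpower_le_1_plus_sq s d : 0 < s -> 0 <= d <= 2 -> Rpower s d <= 1 + s ^ 2.
Proof.
  intros Hs Hd. destruct (Rle_or_lt s 1) as [Hle | Hgt].
  - assert (Rpower s d <= Rpower s 0) by (apply Rle_Rpower_le1; lra).
    rewrite Rpower_O in H by lra. nra.
  - assert (Rpower s d <= Rpower s 2) by (apply Rle_Rpower; lra).
    rewrite Rpower_2 in H by lra. lra.
Qed.

Lemma sq_sub_half_cube_le_Rpower s d : 0 < s -> 0 <= d <= 2 -> s ^ 2 - s ^ 3 / 2 <= Rpower s d.
Proof.
  intros Hs Hd. destruct (Rle_or_lt s 1) as [Hle | Hgt].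
  - assert (Rpower s 2 <= Rpower s d) by (apply Rle_Rpower_le1; lra).
    rewrite Rpower_2 in H by lra. assert (0 <= s ^ 3) by (apply pow_le; lra). lra.
  - assert (Rpower s 0 <= Rpower s d) by (apply Rle_Rpower; lra).
    rewrite Rpower_O in H by lra.
    assert (0 <= s * (s - 4 / 3) ^ 2) by (apply Rmult_le_pos; [lra | apply pow2_ge_0]).
    simpl in *. nra.
Qed.

Section PoissonMoment.
Variables x d : R.
Hypothesis x_ge1 : 1 <= x.
Hypothesis d_range : 0 <= d <= 2.

Let x_pos : 0 < x.
Proof. lra. Qed.

Let majorant k := Rpower x d * (exp_term x k + / x ^ 2 * ((INR k + 1) ^ 2 * exp_term x k)).

Lemma Rpower_succ_le_majorant k : Rpower (INR k + 1) d * exp_term x k <= majorant k.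
Proof.
  pose proof (pos_INR k). pose proof (exp_term_pos x k x_pos).
  replace (INR k + 1) with (x * ((INR k + 1) / x)) at 1 by (field; lra).
  rewrite <- Rpower_mult_distr by (try apply Rdiv_lt_0_compat; lra).
  unfold majorant. rewrite Rmult_assoc. apply Rmult_le_compat_l; [left; apply Rpower_pos |].
  replace (exp_term x k + / x ^ 2 * ((INR k + 1) ^ 2 * exp_term x k))
    with ((1 + ((INR k + 1) / x) ^ 2) * exp_term x k) by (field; lra).
  apply Rmult_le_compat_r; [lra |].
  apply Rpower_le_1_plus_sq; [apply Rdiv_lt_0_compat |]; lra.
Qed.

Lemma is_series_majorant :
  is_series majorant (Rpower x d * (exp x + / x ^ 2 * ((x ^ 2 + 3 * x + 1) * exp x))).
Proof.
  pose proof (is_series_scal (Rpower x d) _ _ (is_series_plus _ _ _ _ (is_series_exp x)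
                (is_series_scal (/ x ^ 2) _ _ (is_series_moment2 x)))) as H.
  eapply is_series_ext; [| exact H]. reflexivity.
Qed.

Lemma ex_series_Rpower_succ : ex_series (fun k => Rpower (INR k + 1) d * exp_term x k).
Proof.
  apply (ex_series_le (fun k => Rpower (INR k + 1) d * exp_term x k) majorant);
    [| eexists; apply is_series_majorant].
  intros k. unfold norm; simpl; unfold abs; simpl.
  pose proof (Rpower_pos (INR k + 1) d). pose proof (exp_term_pos x k x_pos).
  rewrite Rabs_right by (apply Rle_ge, Rmult_le_pos; lra).
  apply Rpower_succ_le_majorant.
Qed.

Lemma Series_Rpower_succ_le :
  Series (fun k => Rpower (INR k + 1) d * exp_term x k) <= 6 * Rpower x d * exp x.
Proof.
  eapply Rle_trans.
  { apply (is_series_le (fun k => Rpower (INR k + 1) d * exp_term x k) majorant);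
      [apply Series_correct, ex_series_Rpower_succ |
      apply is_series_majorant | apply Rpower_succ_le_majorant]. }
  assert (/ x ^ 2 * (x ^ 2 + 3 * x + 1) <= 5).
  { apply Rmult_le_reg_l with (x ^ 2); [nra |].
    rewrite <- Rmult_assoc, Rinv_r by nra. nra. }
  pose proof (Rpower_pos x d). pose proof (exp_pos x).
  replace (6 * Rpower x d * exp x) with (Rpower x d * (exp x + 5 * exp x)) by ring.
  apply Rmult_le_compat_l; [lra |]. rewrite <- Rmult_assoc. nra.
Qed.

(* For large [x] the mass of [exp_term x] sits at [k + 1 ~ x], where
   [(k+1)^d >= x^d (s^2 - s^3/2)] with [s = (k+1)/x]; the second and third moments do the rest. *)
Lemma Series_Rpower_succ_ge :
  Rpower x d * exp x / 16 <= Series (fun k => Rpower (INR k + 1) d * exp_term x k).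
Proof.
  pose proof (Rpower_pos x d). pose proof (exp_pos x).
  pose proof (Series_correct _ ex_series_Rpower_succ) as Hser.
  destruct (Rle_or_lt 4 x) as [Hbig | Hsmall].
  - set (minorant k := Rpower x d *
           (/ x ^ 2 * ((INR k + 1) ^ 2 * exp_term x k) -
            / (2 * x ^ 3) * ((INR k + 1) ^ 3 * exp_term x k))).
    assert (Hmin : is_series minorant (Rpower x d *
              (/ x ^ 2 * ((x ^ 2 + 3 * x + 1) * exp x) -
               / (2 * x ^ 3) * ((x ^ 3 + 6 * x ^ 2 + 7 * x + 1) * exp x)))).
    { pose proof (is_series_scal (Rpower x d) _ _ (is_series_minus _ _ _ _
         (is_series_scal (/ x ^ 2) _ _ (is_series_moment2 x))
         (is_series_scal (/ (2 * x ^ 3)) _ _ (is_series_moment3 x)))) as H1.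
      eapply is_series_ext; [| exact H1]. reflexivity. }
    eapply Rle_trans; [| apply (is_series_le minorant _ _ _ Hmin Hser)].
    + replace (/ x ^ 2 * ((x ^ 2 + 3 * x + 1) * exp x) -
               / (2 * x ^ 3) * ((x ^ 3 + 6 * x ^ 2 + 7 * x + 1) * exp x))
        with (exp x * (1 / 2 - 5 / (2 * x ^ 2) - 1 / (2 * x ^ 3))) by (field; lra).
      assert (5 / (2 * x ^ 2) <= 5 / 32)
        by (apply Rmult_le_compat_l, Rinv_le_contravar; nra).
      assert (1 / (2 * x ^ 3) <= 1 / 128)
        by (apply Rmult_le_compat_l, Rinv_le_contravar; simpl; nra).
      assert (1 / 4 <= 1 / 2 - 5 / (2 * x ^ 2) - 1 / (2 * x ^ 3)) by lra.
      assert (0 < Rpower x d * exp x) by (apply Rmult_lt_0_compat; lra).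
      rewrite <- Rmult_assoc. nra.
    + intros k. pose proof (pos_INR k). pose proof (exp_term_pos x k x_pos).
      unfold minorant. set (s := (INR k + 1) / x).
      replace (INR k + 1) with (x * s) by (unfold s; field; lra).
      rewrite <- Rpower_mult_distr by (try (unfold s; apply Rdiv_lt_0_compat); lra).
      rewrite Rmult_assoc. apply Rmult_le_compat_l; [lra |].
      replace (/ x ^ 2 * ((x * s) ^ 2 * exp_term x k) -
               / (2 * x ^ 3) * ((x * s) ^ 3 * exp_term x k))
        with ((s ^ 2 - s ^ 3 / 2) * exp_term x k) by (field; lra).
      apply Rmult_le_compat_r; [lra |].
      apply sq_sub_half_cube_le_Rpower; [unfold s; apply Rdiv_lt_0_compat |]; lra.
  - eapply Rle_trans; [| apply (is_series_le (exp_term x) _ _ _ (is_series_exp x) Hser)].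
    + assert (Rpower x d <= 16).
      { eapply Rle_trans; [apply Rle_Rpower; [| apply (proj2 d_range)]; lra |].
        rewrite Rpower_2; nra. }
      nra.
    + intros k. pose proof (exp_term_pos x k x_pos). pose proof (pos_INR k).
      rewrite <- (Rmult_1_l (exp_term x k)) at 1. apply Rmult_le_compat_r; [lra |].
      apply Rle_trans with (Rpower (INR k + 1) 0); [rewrite Rpower_O |  apply Rle_Rpower]; lra.
Qed.

End PoissonMoment.

(** * Bounds on M *)

Section KummerMSeries.
Variables al d x : R.
Hypothesis al_range : 1 / 2 <= al <= 1.
Hypothesis d_range : 0 <= d <= 3 / 2.
Hypothesis x_ge1 : 1 <= x.

Let c k := poch (al + d) k / poch al k * exp_term x k.
Let p k := Rpower (INR k + 1) d * exp_term x k.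

Lemma kummerM_term_bounds k : exp (-18) * p k <= c k <= 4 * exp 18 * p k.
Proof.
  pose proof (exp_term_pos x k ltac:(lra)). unfold c, p.
  destruct (poch_ratio_bounds al d al_range d_range k) as [Hlo Hhi].
  rewrite <- !Rmult_assoc. split; apply Rmult_le_compat_r; lra.
Qed.

Lemma kummerM_term_ge0 k : 0 <= c k.
Proof.
  eapply Rle_trans; [| apply kummerM_term_bounds]. unfold p.
  pose proof (exp_pos (-18)). pose proof (Rpower_pos (INR k + 1) d).
  pose proof (exp_term_pos x k ltac:(lra)).
  apply Rmult_le_pos; [| apply Rmult_le_pos]; lra.
Qed.

Lemma ex_series_Rabs_kummerM_terms : ex_series (fun k => Rabs (c k)).
Proof.
  apply (ex_series_le (fun k => Rabs (c k)) (fun k => 4 * exp 18 * p k)).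
  - intros k. unfold norm; simpl; unfold abs; simpl.
    rewrite Rabs_Rabsolu, Rabs_right by (apply Rle_ge, kummerM_term_ge0). apply kummerM_term_bounds.
  - exact (ex_series_scal (4 * exp 18) p (ex_series_Rpower_succ x d x_ge1 ltac:(lra))).
Qed.

Lemma Series_kummerM_terms_bounds :
  exp (-18) / 16 * Rpower x d * exp x <= Series c <= 24 * exp 18 * Rpower x d * exp x.
Proof.
  assert (Hd : 0 <= d <= 2) by lra.
  pose proof (Series_correct _ (ex_series_Rabs _ ex_series_Rabs_kummerM_terms)) as Hc.
  pose proof (Series_correct _ (ex_series_Rpower_succ x d x_ge1 Hd)) as Hp.
  pose proof (Series_Rpower_succ_ge x d x_ge1 Hd) as Hge.
  pose proof (Series_Rpower_succ_le x d x_ge1 Hd) as Hle.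
  fold p in Hp, Hge, Hle.
  pose proof (exp_pos (-18)). pose proof (exp_pos 18).
  split.
  - apply Rle_trans with (exp (-18) * Series p); [nra |].
    apply (is_series_le (fun k => exp (-18) * p k) c); [| exact Hc |].
    + exact (is_series_scal _ _ _ Hp).
    + intros k. apply kummerM_term_bounds.
  - apply Rle_trans with (4 * exp 18 * Series p); [| nra].
    apply (is_series_le c (fun k => 4 * exp 18 * p k)); [exact Hc | |].
    + exact (is_series_scal _ _ _ Hp).
    + intros k. apply kummerM_term_bounds.
Qed.

End KummerMSeries.

Lemma kummerM_bounds alpha beta y :
  1 / 2 <= alpha <= 1 -> - (3 / 2) <= beta <= 0 -> y <= -1 ->
  exp (-18) / 16 * Rpower (- y) (- beta) <= kummerM beta alpha y <=
  24 * exp 18 * Rpower (- y) (- beta).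
Proof.
  intros Hal Hbeta Hy.
  replace (kummerM beta alpha y) with (kummerM (alpha - (alpha + - beta)) alpha y)
    by (f_equal; ring).
  rewrite kummerM_transformation
    by (lra || apply (ex_series_Rabs_kummerM_terms alpha (- beta) (- y)); lra).
  destruct (Series_kummerM_terms_bounds alpha (- beta) (- y)) as [Hlo Hhi]; try lra.
  assert (Hcancel : forall K, K = exp y * (K * exp (- y))).
  { intros K. rewrite <- Rmult_assoc, (Rmult_comm (exp y)), Rmult_assoc, <- exp_plus.
    rewrite Rplus_opp_r, exp_0. ring. }
  pose proof (exp_pos y).
  split.
  - rewrite (Hcancel (exp (-18) / 16 * Rpower (- y) (- beta))).
    apply Rmult_le_compat_l; lra.
  - rewrite (Hcancel (24 * exp 18 * Rpower (- y) (- beta))).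
    apply Rmult_le_compat_l; lra.
Qed.

Theorem lemma4p8 (n : nat) (hn : (2 <= n)%nat) :
  let alpha := 1 - / INR n in
  exists Cn : R, 0 < Cn /\
    forall beta y : R,
      beta <= 0 -> alpha - beta - 1 <= 1 -> y <= -1 ->
      / Cn * exp y * Rpower (- y) (beta - alpha) <= kummerT beta alpha y /\
      kummerT beta alpha y <= exp y * Rpower (- y) (beta - alpha) /\
      / Cn * Rpower (- y) (- beta) <= kummerM beta alpha y /\
      kummerM beta alpha y <= Cn * Rpower (- y) (- beta).
Proof.
  intros alpha.
  assert (Halpha : 1 / 2 <= alpha <= 1).
  { assert (Hn : 2 <= INR n) by (apply (le_INR 2); exact hn).
    assert (0 < / INR n <= / 2) by (split; [apply Rinv_0_lt_compat | apply Rinv_le_contravar]; lra).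
    unfold alpha. lra. }
  pose proof (exp_pos 18) as He.
  assert (He1 : 1 <= exp 18) by (rewrite <- exp_0; apply exp_le; lra).
  exists (288 * exp 18). split; [lra |].
  intros beta y Hbeta HQ Hy.
  destruct (kummerT_bounds alpha beta y ltac:(lra) ltac:(lra) Hy) as [HT1 HT2].
  destruct (kummerM_bounds alpha beta y Halpha ltac:(lra) Hy) as [HM1 HM2].
  pose proof (exp_pos y). pose proof (Rpower_pos (- y) (beta - alpha)).
  pose proof (Rpower_pos (- y) (- beta)).
  assert (Hinv : / (288 * exp 18) <= / 288) by (apply Rinv_le_contravar; lra).
  assert (Hinv18 : / (288 * exp 18) <= exp (-18) / 16).
  { replace (exp (-18)) with (/ exp 18) by (rewrite <- exp_Ropp; f_equal; lra).
    rewrite Rinv_mult. unfold Rdiv. rewrite Rmult_comm.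
    apply Rmult_le_compat_l; [left; apply Rinv_0_lt_compat, He |].
    apply Rinv_le_contravar; lra. }
  repeat split; [| exact HT2 | |].
  - eapply Rle_trans; [| exact HT1]. rewrite !Rmult_assoc.
    apply Rmult_le_compat_r; [apply Rmult_le_pos |]; lra.
  - eapply Rle_trans; [| exact HM1]. apply Rmult_le_compat_r; lra.
  - eapply Rle_trans; [exact HM2 |]. apply Rmult_le_compat_r; lra.
Qed.
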